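(* Let $X \subseteq 2^\omega$ be nice. Then for every Borel function $x \mapsto Y^x$ from $2^\omega$ to $[\omega]^\omega$ there exists a set $Y = \{u_n : n \in \omega\} \subseteq \omega$ such that (1) $u_{n+1} \geq u_n + 2$ for all $n$, and (2) for every $x \in X$, the set $Y \cap Y^x$ is infinite.
   Context: $[\omega]^\omega$ denotes the set of infinite subsets of $\omega$, viewed as a subspace of $2^\omega$. A set $X \subseteq 2^\omega$ is nice if for every Borel function $x \mapsto f^x$ from $2^\omega$ to $\omega^\omega$ there exists $g \in \omega^\omega$ such that for every $x \in X$ there are infinitely many $n$ with $f^x(n) = g(n)$. *)

From HB Require Import structures.
From mathcomp Require Import all_boot all_order all_algebra.
From mathcomp Require Import all_classical all_reals all_analysis.
Set Implicit Arguments. Unset Strict Implicit. Unset Printing Implicit Defensive.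
Local Open Scope classical_set_scope.

Definition Cantor : Type := prod_topology (fun _ : nat => bool).
Definition Baire : Type := prod_topology (fun _ : nat => nat).

Definition borel (T : topologicalType) : set (set T) := <<s @open T >>.

Definition borel_fun (T U : topologicalType) (f : T -> U) : Prop :=
  forall B : set U, borel B -> borel (f @^-1` B).

Definition setof (x : Cantor) : set nat := [set n | x n = true].

Definition inf_subset (x : Cantor) : Prop := infinite_set (setof x).

Definition nice (X : set Cantor) : Prop :=
  forall f : Cantor -> Baire, borel_fun f ->
    exists g : nat -> nat, forall x, X x -> infinite_set [set n | f x n = g n].

From Pilot Require Import Defs.
From HB Require Import structures.
From mathcomp Require Import all_boot all_order all_algebra.
From mathcomp Require Import all_classical all_reals all_analysis.
From mathcomp Require Import zify.
Set Implicit Arguments. Unset Strict Implicit.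
Local Open Scope classical_set_scope.

(* Send y with infinite support to the point of Baire space whose n-th value
   codes the first n+1 terms of the greedy 3-separated enumeration of y.  This
   map is continuous on such y, so its composite with F is Borel and niceness
   gives g guessing it infinitely often at every x in X.  Build Y in stages: at
   stage n add a point of the list coded by g n at distance at least 2 from the
   n points chosen so far; a 3-separated list of n+1 points has one, since
   each chosen point is close to at most one of its terms.  When g n guesses
   right for x, the new point lies in Y^x, so Y meets Y^x infinitely often.
   Distinct points of Y are 2 apart, so its increasing enumeration is the u
   sought. *)

Lemma infinite_set_nat_ge (A : set nat) m :
  infinite_set A -> exists2 k, (m <= k)%N & A k.
Proof.
move=> infA; apply: contrapT => noA; apply: infA.
apply: (sub_finite_set _ (finite_II m)) => k Ak /=.
by rewrite ltnNge; apply/negP => mk; apply: noA; exists k.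
Qed.

(* Junk value m when P has no element above m. *)
Definition next_in (P : set nat) (m : nat) : nat :=
  if pselect (exists k, (m <= k) && `[< P k >]) is left ex then ex_minn ex else m.

Lemma next_inP (P : set nat) m k : (m <= k)%N -> P k ->
  [/\ (m <= next_in P m)%N, P (next_in P m) &
      forall j, (m <= j)%N -> P j -> (next_in P m <= j)%N].
Proof.
move=> mk Pk; rewrite /next_in; case: pselect => [ex|[]]; last first.
  by exists k; rewrite mk; apply/asboolP.
case: ex_minnP => i /andP[mi /asboolP Pi] min_i; split=> // j mj Pj.
by apply: min_i; rewrite mj; apply/asboolP.
Qed.

Lemma next_in_agree (P Q : set nat) m K : (exists2 k, (m <= k)%N & P k) ->
  (forall j, (j <= K)%N -> Q j <-> P j) -> (next_in P m <= K)%N ->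
  next_in Q m = next_in P m.
Proof.
move=> [k mk Pk] PQ leK; have [mp Pp minP] := next_inP mk Pk.
have Qp : Q (next_in P m) by apply/PQ.
have [mq Qq minQ] := next_inP mp Qp.
have le_QP := minQ _ mp Qp.
have Pq : P (next_in Q m) by apply/(PQ _ (leq_trans le_QP leK)).
by apply/eqP; rewrite eqn_leq le_QP minP.
Qed.

Fixpoint gap_enum (d : nat) (P : set nat) (i : nat) : nat :=
  if i is i'.+1 then next_in P (gap_enum d P i' + d) else next_in P 0.

Section GapEnum.
Variables (d : nat) (P : set nat).
Hypothesis infP : infinite_set P.

Let next_in_infP m : [/\ (m <= next_in P m)%N, P (next_in P m) &
    forall j, (m <= j)%N -> P j -> (next_in P m <= j)%N].
Proof. by have [k mk Pk] := infinite_set_nat_ge m infP; exact: next_inP mk Pk. Qed.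

Lemma gap_enum_mem i : P (gap_enum d P i).
Proof.
case: i => [|i] /=; first by have [] := next_in_infP 0.
by have [] := next_in_infP (gap_enum d P i + d).
Qed.

Lemma gap_enum_step i : (gap_enum d P i + d <= gap_enum d P i.+1)%N.
Proof. by have [] := next_in_infP (gap_enum d P i + d). Qed.

Lemma gap_enum_lt i j : (i < j)%N -> (gap_enum d P i + d <= gap_enum d P j)%N.
Proof.
elim: j => // j IH; rewrite ltnS leq_eqVlt => /predU1P[->|ij].
  exact: gap_enum_step.
by have := IH ij; have := gap_enum_step j; lia.
Qed.

Lemma gap_enum_agree (Q : set nat) n :
  (forall j, (j <= gap_enum d P n)%N -> Q j <-> P j) ->
  forall i, (i <= n)%N -> gap_enum d Q i = gap_enum d P i.
Proof.
move=> PQ; have enum_le i : (i <= n)%N -> (gap_enum d P i <= gap_enum d P n)%N.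
  by rewrite leq_eqVlt => /predU1P[-> //|/gap_enum_lt]; lia.
elim=> [|i IH] ilen /=.
  exact: next_in_agree (infinite_set_nat_ge 0 infP) PQ (enum_le 0 ilen).
rewrite IH; last exact: ltnW.
exact: next_in_agree (infinite_set_nat_ge _ infP) PQ (enum_le i.+1 ilen).
Qed.

Lemma gap_enum_ge i : (0 < d)%N -> (i <= gap_enum d P i)%N.
Proof. by move=> d0; elim: i => // i IH; have := gap_enum_step i; lia. Qed.

Lemma range_gap_enum : (0 < d)%N ->
  (forall a b, P a -> P b -> (a < b)%N -> (a + d <= b)%N) ->
  range (gap_enum d P) = P.
Proof.
move=> d0 sepP; apply/seteqP; split=> [_ [i _ <-]|c Pc]; first exact: gap_enum_mem.
suff : forall k, (c <= gap_enum d P k)%N -> range (gap_enum d P) c.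
  by apply; exact: gap_enum_ge.
elim=> [|k IH] ck.
  have [_ _ minc] := next_in_infP 0.
  by exists 0%N => //; apply/eqP; rewrite eqn_leq ck minc.
have [/IH //|kc] := leqP c (gap_enum d P k).
have [_ _ minc] := next_in_infP (gap_enum d P k + d).
exists k.+1 => //; apply/eqP; rewrite eqn_leq ck minc //.
exact: sepP (gap_enum_mem k) Pc kc.
Qed.

End GapEnum.

Lemma pairwise_gap_enum d (P : set nat) k : infinite_set P ->
  pairwise (fun a b => a + d <= b)%N (mkseq (gap_enum d P) k).
Proof.
move=> infP; rewrite pairwise_map.
apply: (@sub_pairwise _ ltn); first by move=> i j; exact: gap_enum_lt.
by rewrite -sorted_pairwise ?iota_ltn_sorted //; exact: ltn_trans.
Qed.

Definition cylinder {K : nat -> Type} (w : forall i, K i) (n : nat) :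
  set (forall i, K i) := [set z | forall i, (i < n)%N -> z i = w i].

Lemma nbhs_cylinder (K : nat -> topologicalType) (w : prod_topology K) n :
  (forall i (a : K i), nbhs a [set a]) -> nbhs w (cylinder w n).
Proof.
move=> isolated; elim: n => [|n IH].
  by apply: filterS filterT => z _ i; rewrite ltn0.
have wn : nbhs w (proj n @^-1` [set w n]).
  by apply: proj_continuous; exact: isolated.
apply: filterS (filterI IH wn) => z [zw zn] i; rewrite ltnS leq_eqVlt.
by case/predU1P=> [->|]; [exact: zn | exact: zw].
Qed.

Lemma nbhs_sub_cylinder (K : nat -> topologicalType) (w : prod_topology K)
    (B : set (prod_topology K)) :
  nbhs w B -> exists n, cylinder w n `<=` B.
Proof.
pose G := filter_from [set: nat] (cylinder w).
have FG : Filter G.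
  apply: filter_from_filter; first by exists 0%N.
  move=> i j _ _; exists (maxn i j) => // z zw.
  by split=> k kl; apply: zw; rewrite leq_max kl ?orbT.
have Gw : G --> w.
  apply/cvg_sup => i U [V] [[W] oW <-] WfN WU.
  by apply: (filterS WU); exists i.+1 => // z /= zw; rewrite /= zw.
by move=> /Gw [n _ sub]; exists n.
Qed.

Section BorelWithin.
Variables (U V : topologicalType) (D : set U) (f : U -> V).
Hypothesis f_cont : {within D, continuous f}.

Lemma borel_trace (B : set V) :
  borel B -> exists2 A : set U, borel A & forall x, D x -> A x <-> B (f x).
Proof.
move: B; apply: smallest_sub; first split.
- by exists set0 => //; exact: sigma_algebra0.
- move=> B [A bA AB]; exists (setT `\` A); first exact: sigma_algebraCD.
  by move=> x Dx; split=> -[_ nA]; split=> // ?; apply: nA; apply/(AB x Dx).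
- move=> B goodB; have /choice[A AB] :
      forall n, exists A : set U, borel A /\ forall x, D x -> A x <-> B n (f x).
    by move=> n; have [A bA AB] := goodB n; exists A.
  exists (\bigcup_n A n); first by apply: sigma_algebra_bigcup => n; case: (AB n).
  by move=> x Dx; split=> -[n _ ?]; exists n => //; apply/((AB n).2 x Dx).
move=> B oB; have /open_subspaceP[A oA AB] := (continuousP _).1 f_cont B oB.
exists A; first exact: sub_sigma_algebra.
move=> x Dx; split=> [Ax|Bx].
  by have [] : (from_subspace D f @^-1` B `&` D) x by rewrite -AB.
by have [] : (A `&` D) x by rewrite AB.
Qed.

Lemma borel_fun_comp_within (T : topologicalType) (F : T -> U) :
  (forall t, D (F t)) -> borel_fun F -> borel_fun (f \o F).
Proof.
move=> DF bF B /borel_trace[A bA AB].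
suff -> : (f \o F) @^-1` B = F @^-1` A by exact: bF.
by apply/seteqP; split=> t /(AB _ (DF t)).
Qed.

End BorelWithin.

Definition apart (a b : nat) : bool := (a + 2 <= b) || (b + 2 <= a).

Definition far_from (s : seq nat) (c : nat) : bool := all (apart c) s.

Lemma far_from_notin s c : far_from s c -> c \notin s.
Proof. by move=> /allP far; apply/negP => /far; rewrite /apart; lia. Qed.

Lemma count_not_apart t l : pairwise (fun a b => a + 3 <= b)%N l ->
  (count (predC (apart^~ t)) l <= 1)%N.
Proof.
elim: l => //= a l IH /andP[a_le sep].
case: (boolP (apart a t)) => /= [_|near_a]; first exact: IH.
rewrite (@eq_in_count _ _ pred0) ?count_pred0 // => b /(allP a_le).
by move: near_a; rewrite /apart /=; lia.
Qed.

Lemma has_far_from s l : pairwise (fun a b => a + 3 <= b)%N l ->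
  (size s < size l)%N -> has (far_from s) l.
Proof.
elim: s l => [|t s IH] l sep; first by case: l {sep}.
move=> /= lt_sl; have /hasP[c] : has (far_from s) [seq c <- l | apart c t].
  apply: IH; first exact: pairwise_filter.
  rewrite size_filter; have := count_predC (apart^~ t) l.
  have := count_not_apart t sep; lia.
by rewrite mem_filter => /andP[ct cl] far_c; apply/hasP; exists c; rewrite //= ct.
Qed.

(* The default keeps every stage below adding a new point, even when the list
   offered contains no point far from s. *)
Definition choose_far (s l : seq nat) : nat :=
  head (\max_(t <- s) t + 2) [seq c <- l | far_from s c].

Lemma choose_far_far s l : far_from s (choose_far s l).
Proof.
rewrite /choose_far; case E: [seq c <- l | _] => [|c l'] /=.
  apply/allP => t ts; have : (t <= \max_(t <- s) t)%N by exact: leq_bigmax_seq.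
  by rewrite /apart; lia.
have : c \in [seq c <- l | far_from s c] by rewrite E mem_head.
by rewrite mem_filter => /andP[].
Qed.

Lemma choose_far_mem s l : has (far_from s) l -> choose_far s l \in l.
Proof.
rewrite has_filter /choose_far; case E: [seq c <- l | _] => [|c l'] //= _.
have : c \in [seq c <- l | far_from s c] by rewrite E mem_head.
by rewrite mem_filter => /andP[].
Qed.

Definition candidates (g : nat -> nat) (n : nat) : seq nat :=
  odflt [::] (unpickle (g n)).

Fixpoint stage (g : nat -> nat) (n : nat) : seq nat :=
  if n is n'.+1 then choose_far (stage g n') (candidates g n') :: stage g n'
  else [::].

Definition chosen (g : nat -> nat) : set nat := [set c | exists n, c \in stage g n].

Section Stages.
Variable g : nat -> nat.

Lemma size_stage n : size (stage g n) = n.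
Proof. by elim: n => //= n ->. Qed.

Lemma stage_uniq n : uniq (stage g n).
Proof. by elim: n => //= n ->; rewrite far_from_notin ?choose_far_far. Qed.

Lemma stage_sub n m : (n <= m)%N -> {subset stage g n <= stage g m}.
Proof.
elim: m => [|m IH]; first by rewrite leqn0 => /eqP ->.
rewrite leq_eqVlt => /predU1P[-> //|/IH sub] c /sub cm.
by rewrite inE cm orbT.
Qed.

Lemma stage_apart n a b :
  a \in stage g n -> b \in stage g n -> a != b -> apart a b.
Proof.
elim: n => //= n IH; have /allP far := choose_far_far (stage g n) (candidates g n).
rewrite !inE => /predU1P[-> | an] /predU1P[-> | bn]; rewrite ?eqxx // => ab.
- exact: far.
- by have := far a an; rewrite /apart orbC.
- exact: IH.
Qed.

Lemma chosen_sep a b : chosen g a -> chosen g b -> (a < b)%N -> (a + 2 <= b)%N.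
Proof.
move=> [n an] [m bm] ab.
have := stage_apart (stage_sub (leq_maxl n m) an) (stage_sub (leq_maxr n m) bm).
by rewrite /apart neq_ltn ab; lia.
Qed.

Lemma chosen_infinite : infinite_set (chosen g).
Proof.
move=> /finite_seqP[s chosen_s].
have sub : {subset stage g (size s).+1 <= s}.
  move=> c cn; have : chosen g c by exists (size s).+1.
  by rewrite chosen_s.
by have := uniq_leq_size (stage_uniq _) sub; rewrite size_stage ltnn.
Qed.

Lemma chosen_sub_stage (s : seq nat) : (forall c, c \in s -> chosen g c) ->
  exists N, {subset s <= stage g N}.
Proof.
elim: s => [|a s IH] sub; first by exists 0%N.
have [N sN] : exists N, {subset s <= stage g N}.
  by apply: IH => c cs; apply: sub; rewrite inE cs orbT.
have [m am] := sub a (mem_head a s).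
exists (maxn N m) => c; rewrite inE => /predU1P[-> | cs].
  exact: stage_sub (leq_maxr N m) _ am.
exact: stage_sub (leq_maxl N m) _ (sN c cs).
Qed.

Lemma chosenI_infinite (A : set nat) :
  (forall N, exists2 n, (N <= n)%N & A (choose_far (stage g n) (candidates g n))) ->
  infinite_set (chosen g `&` A).
Proof.
move=> hitA /finite_seqP[s sE].
have [N sN] : exists N, {subset s <= stage g N}.
  apply: chosen_sub_stage => c cs.
  by have [] : (chosen g `&` A) c by rewrite sE.
have [n Nn Ac] := hitA N; set c := choose_far _ _ in Ac.
have cs : c \in s.
  suff : (chosen g `&` A) c by rewrite sE.
  by split=> //; exists n.+1; rewrite inE eqxx.
have := far_from_notin (choose_far_far (stage g n) (candidates g n)).
by rewrite (stage_sub Nn (sN c cs)).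
Qed.

End Stages.

Definition sparse_code (y : Cantor) : Defs.Baire :=
  fun n => pickle (mkseq (gap_enum 3 (setof y)) n.+1).

Lemma sparse_code_continuous : {within inf_subset, continuous sparse_code}.
Proof.
apply/subspace_continuousP => y infy B /nbhs_sub_cylinder[N sub].
have near_y := @nbhs_cylinder _ y (gap_enum 3 (setof y) N).+1
  (fun i => @discrete_set1 _).
apply: filterS near_y => z zy _; apply: sub => n nN.
rewrite /sparse_code; congr pickle; apply/eq_in_map => i.
rewrite mem_iota => /andP[_ iN].
apply: (@gap_enum_agree _ _ infy _ N) => [j jN|]; last by lia.
by rewrite /setof /= zy // ltnS.
Qed.

Lemma choose_far_sparse_code g (y : Cantor) n : infinite_set (setof y) ->
  g n = sparse_code y n -> setof y (choose_far (stage g n) (candidates g n)).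
Proof.
move=> infy gn; have cand : candidates g n = mkseq (gap_enum 3 (setof y)) n.+1.
  by rewrite /candidates gn pickleK.
have : has (far_from (stage g n)) (candidates g n).
  rewrite cand; apply: has_far_from; first exact: pairwise_gap_enum.
  by rewrite size_mkseq size_stage.
by move=> /choose_far_mem; rewrite cand => /mapP[i _ ->]; exact: gap_enum_mem.
Qed.

Unset Implicit Arguments.
Set Strict Implicit.

Theorem lemma2p7 (X : set Cantor) :
  nice X ->
  forall F : Cantor -> Cantor,
    borel_fun F -> (forall x : Cantor, inf_subset (F x)) ->
    exists u : nat -> nat,
      (forall n : nat, (u n + 2 <= u n.+1)%N) /\
      (forall x : Cantor, X x -> infinite_set (range u `&` setof (F x))).
Proof.
move=> niceX F bF infF.
have [g gF] := niceX _ (borel_fun_comp_within sparse_code_continuous infF bF).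
have inf_chosen := @chosen_infinite g.
exists (gap_enum 2 (chosen g)); split; first exact: gap_enum_step.
move=> x Xx; rewrite range_gap_enum //; last exact: chosen_sep.
apply: chosenI_infinite => N; have [n Nn gn] := infinite_set_nat_ge N (gF x Xx).
by exists n => //; apply: choose_far_sparse_code (infF x) _.
Qed.
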